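(* Let $d\geq 2$ and let $\mathsf{M}_1,\mathsf{M}_2$ be two $d$-outcome POVMs (outcomes labelled $1,\dots,d$) on $\mathbb{C}^d$. If $\mathsf{M}_1$ and $\mathsf{M}_2$ are compatible, then $$\bar{P}_{\rm qrac}(\mathsf{M}_1,\mathsf{M}_2)=\frac{1}{2d^2}\sum_{x,y=1}^d \big\|\mathsf{M}_1(x)+\mathsf{M}_2(y)\big\| \leq \frac12\left(1+\frac1d\right),$$ i.e. a compatible pair of $d$-outcome measurements is not useful for $(2,d)$-QRAC.
   Context: $\|\cdot\|$ is the operator norm. Two POVMs $\mathsf{M}_1$ (outcomes $x$) and $\mathsf{M}_2$ (outcomes $y$) are compatible if there exists a POVM $\mathsf{G}$ on the product outcome set with $\sum_y \mathsf{G}(x,y)=\mathsf{M}_1(x)$ and $\sum_x\mathsf{G}(x,y)=\mathsf{M}_2(y)$ for all $x,y$; otherwise incompatible. In the $(2,d)$ quantum random access code, Alice receives two dits $(x_1,x_2)$ uniformly at random and sends a state $\mathcal{E}(x_1,x_2)$ on $\mathbb{C}^d$; Bob receives $j\in\{1,2\}$ uniformly and measures $\mathsf{M}_j$, succeeding if the outcome is $x_j$. $\bar P_{\rm qrac}(\mathsf{M}_1,\mathsf{M}_2)$ is the average success probability with the encoding optimized, which equals the displayed norm expression. The quantity $\frac12(1+\frac1d)$ is the optimal average success probability of the classical $(2,d)$ random access code; a pair is called useful for $(2,d)$-QRAC if $\bar P_{\rm qrac}$ strictly exceeds it. *)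

From HB Require Import structures.
From mathcomp Require Import all_boot all_order all_algebra.
From mathcomp Require Import complex.
From mathcomp Require Import classical_sets reals.
Set Implicit Arguments. Unset Strict Implicit. Unset Printing Implicit Defensive.
Import Order.TTheory GRing.Theory Num.Theory.
Local Open Scope ring_scope.
Local Open Scope complex_scope.

Section Defs.
Variable R : realType.
Notation C := (R[i]).

Definition adjmx (m n : nat) (A : 'M[C]_(m, n)) : 'M[C]_(n, m) :=
  (map_mx (fun z : C => z^*) A)^T.

(* positive semidefinite: <v, A v> is a nonnegative real for every v *)
Definition psd (d : nat) (A : 'M[C]_d) : Prop :=
  forall v : 'cV[C]_d, 0 <= (adjmx v *m A *m v) 0 0.

Definition is_povm (d : nat) (X : finType) (M : X -> 'M[C]_d) : Prop :=
  (forall x, psd (M x)) /\ \sum_(x : X) M x = 1%:M.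

Definition csq (z : C) : R := (complex.Re z) ^+ 2 + (complex.Im z) ^+ 2.
Definition vnormsq (d : nat) (v : 'cV[C]_d) : R := \sum_i csq (v i 0).

Definition opnorm (d : nat) (A : 'M[C]_d) : R :=
  Num.sqrt (reals.sup [set vnormsq (A *m v) | v in [set v : 'cV[C]_d | vnormsq v = 1]]%classic).

Definition compatible (d : nat) (X Y : finType)
    (M1 : X -> 'M[C]_d) (M2 : Y -> 'M[C]_d) : Prop :=
  exists G : X -> Y -> 'M[C]_d,
    is_povm (fun p : X * Y => G p.1 p.2) /\
    (forall x, \sum_(y : Y) G x y = M1 x) /\
    (forall y, \sum_(x : X) G x y = M2 y).

(* average success probability of the (2,d)-QRAC with optimized encoding,
   given by the norm formula *)
Definition Pqrac (d : nat) (M1 M2 : 'I_d -> 'M[C]_d) : R :=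
  (2 * (d%:R) ^+ 2)^-1 * \sum_(x < d) \sum_(y < d) opnorm (M1 x + M2 y).

End Defs.

(* A joint measurement G of M1 and M2 writes M1 x + M2 y as G x y + E, where E is
   the effect of the event "first outcome x or second outcome y", so 0 <= E <= 1.
   Hence ||M1 x + M2 y|| <= ||G x y|| + ||E|| <= tr (G x y) + 1, and summing over
   the d^2 pairs (x, y) gives at most d^2 + d, because the traces of G add up to
   tr 1 = d. *)

From HB Require Import structures.
From mathcomp Require Import all_boot all_order all_algebra.
From mathcomp Require Import complex reals.
From mathcomp Require Import ring lra.
Set Implicit Arguments. Unset Strict Implicit. Unset Printing Implicit Defensive.
Import Order.TTheory GRing.Theory Num.Theory.
Local Open Scope ring_scope.
Local Open Scope complex_scope.

Section ComplexParts.
Variable R : realType.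
Notation C := R[i].

Lemma ReD (x y : C) : complex.Re (x + y) = complex.Re x + complex.Re y.
Proof. by case: x => ? ?; case: y. Qed.

Lemma ImD (x y : C) : complex.Im (x + y) = complex.Im x + complex.Im y.
Proof. by case: x => ? ?; case: y. Qed.

Lemma ReJ (x : C) : complex.Re x^* = complex.Re x.
Proof. by case: x. Qed.

Lemma Re_sum (I : Type) (r : seq I) (P : pred I) (F : I -> C) :
  complex.Re (\sum_(i <- r | P i) F i) = \sum_(i <- r | P i) complex.Re (F i).
Proof. by elim/big_rec2: _ => // i y1 y2 _ <-; rewrite ReD. Qed.

Lemma Re_natr n : complex.Re (n%:R : C) = n%:R.
Proof. by elim: n => // n IH; rewrite !mulrS ReD IH. Qed.

Lemma csq_ge0 (z : C) : 0 <= csq z.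
Proof. by rewrite addr_ge0 ?sqr_ge0. Qed.

Lemma mulJc (z : C) : z^* * z = (csq z)%:C.
Proof.
case: z => a b; apply/eqP; rewrite eq_complex /= /csq /=.
by apply/andP; split; apply/eqP; ring.
Qed.

End ComplexParts.

Lemma le_mul_of_quadratic_ge0 (R : realFieldType) (a b c : R) : 0 <= c ->
  (forall s, 2 * s * b <= a + s ^+ 2 * b * c) -> b <= a * c.
Proof.
move=> c_ge0 hq; have a_ge0 : 0 <= a by have := hq 0; lra.
have [c0|c_gt0] := eqVneq c 0.
  rewrite c0 mulr0 leNgt; apply/negP => b_gt0.
  have := hq ((a + 1) / b); rewrite c0 mulr0 addr0 -mulrA divfK ?gt_eqF //; lra.
have c_pos : 0 < c by rewrite lt_def c_gt0.
have : c^-1 ^+ 2 * b * c = c^-1 * b by field.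
move: (hq c^-1) => /[swap] -> hb.
by rewrite -(divfK c_gt0 b) ler_pM2r //; lra.
Qed.

Lemma le_of_sqr_le_mul (R : realDomainType) (x y : R) : 0 <= y -> x ^+ 2 <= x * y -> x <= y.
Proof. by move=> y_ge0 hxy; nra. Qed.

Section InnerProduct.
Variables (R : realType) (d : nat).
Notation C := R[i].
Implicit Types (u v w : 'cV[C]_d) (K : 'M[C]_d).

Definition ip u w : C := \sum_i (u i 0)^* * w i 0.

Definition qform K v : R := complex.Re (ip v (K *m v)).

Lemma adjmx_mulmx00 u w : (adjmx u *m w) 0 0 = ip u w.
Proof. by rewrite mxE; apply: eq_bigr => i _; rewrite !mxE. Qed.

Lemma ipDl u1 u2 w : ip (u1 + u2) w = ip u1 w + ip u2 w.
Proof. by rewrite /ip -big_split; apply: eq_bigr => i _; rewrite mxE rmorphD mulrDl. Qed.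

Lemma ipDr u w1 w2 : ip u (w1 + w2) = ip u w1 + ip u w2.
Proof. by rewrite /ip -big_split; apply: eq_bigr => i _; rewrite mxE mulrDr. Qed.

Lemma ipZl c u w : ip (c *: u) w = c^* * ip u w.
Proof. by rewrite /ip mulr_sumr; apply: eq_bigr => i _; rewrite mxE rmorphM mulrA. Qed.

Lemma ipZr u c w : ip u (c *: w) = c * ip u w.
Proof. by rewrite /ip mulr_sumr; apply: eq_bigr => i _; rewrite mxE mulrCA. Qed.

Lemma ipC u w : ip w u = (ip u w)^*.
Proof. by rewrite /ip rmorph_sum; apply: eq_bigr => i _; rewrite rmorphM /= conjcK mulrC. Qed.

Lemma ipvv v : ip v v = (vnormsq v)%:C.
Proof. by rewrite /ip /vnormsq rmorph_sum; apply: eq_bigr => i _; rewrite mulJc. Qed.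

Lemma vnormsq_ge0 v : 0 <= vnormsq v.
Proof. by apply: sumr_ge0 => i _; apply: csq_ge0. Qed.

Lemma ip_delta_mx j v : ip (delta_mx j 0) v = v j 0.
Proof.
rewrite /ip (bigD1 j) //= big1 => [|i /negbTE ij]; rewrite !mxE ?eqxx ?ij /=.
  by rewrite rmorph1 mul1r addr0.
by rewrite rmorph0 mul0r.
Qed.

Lemma qform_delta_mx K j : qform K (delta_mx j 0) = complex.Re (K j j).
Proof. by rewrite /qform ip_delta_mx -colE mxE. Qed.

Lemma qformD K1 K2 v : qform (K1 + K2) v = qform K1 v + qform K2 v.
Proof. by rewrite /qform mulmxDl ipDr ReD. Qed.

Lemma qform1 v : qform 1%:M v = vnormsq v.
Proof. by rewrite /qform mul1mx ipvv. Qed.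

Lemma psdP K : psd K <-> forall v, complex.Im (ip v (K *m v)) = 0 /\ 0 <= qform K v.
Proof.
rewrite /psd; split=> hK v.
  by move: (hK v); rewrite -mulmxA adjmx_mulmx00 lecE /= => /andP[/eqP].
by rewrite -mulmxA adjmx_mulmx00 lecE /= (hK v).1 (hK v).2 eqxx.
Qed.

End InnerProduct.

Section PositiveSemidefinite.
Variables (R : realType) (d : nat).
Notation C := R[i].
Implicit Types (u v w : 'cV[C]_d) (K : 'M[C]_d).

Lemma ip_mulmx_expand K u w t : ip (u + t *: w) (K *m (u + t *: w)) =
  ip u (K *m u) + t * ip u (K *m w) + t^* * ip w (K *m u) + t^* * t * ip w (K *m w).
Proof. by rewrite mulmxDr -scalemxAr !ipDl !ipDr !ipZl !ipZr; ring. Qed.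

Lemma psd_adj K u w : psd K -> ip w (K *m u) = (ip u (K *m w))^*.
Proof.
move=> /psdP hK.
have [h1 _] := hK (u + 1 *: w); have [hi _] := hK (u + 'i *: w).
move: h1 hi (hK u).1 (hK w).1; rewrite !ip_mulmx_expand.
case: (ip u _) => a1 a2; case: (ip u _) => b1 b2.
case: (ip w _) => e1 e2; case: (ip w _) => c1 c2 /= *.
by apply/eqP; rewrite eq_complex /=; apply/andP; split; apply/eqP; lra.
Qed.

Lemma psd_cauchy_schwarz K u w : psd K ->
  csq (ip u (K *m w)) <= qform K u * qform K w.
Proof.
move=> hK; have /psdP hK' := hK.
apply: le_mul_of_quadratic_ge0; first exact: (hK' w).2.
move=> s; set b := ip u (K *m w).
(* the test vector u - s b^* w *)
have [_] := hK' (u + ((- s * complex.Re b) +i* (s * complex.Im b)) *: w).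
rewrite /qform ip_mulmx_expand (psd_adj u w hK) -/b.
move: (hK' u).1 (hK' w).1; rewrite /csq.
case: b => b1 b2; case: (ip u _) => a1 a2; case: (ip w _) => c1 c2 /= _ -> h.
by rewrite -subr_ge0; apply: (le_trans h); rewrite le_eqVlt; apply/orP; left; apply/eqP; ring.
Qed.

Lemma psd0 : psd (0 : 'M[C]_d).
Proof. by apply/psdP => v; rewrite /qform mul0mx -(scale0r 0) ipZr mul0r. Qed.

Lemma psdD K1 K2 : psd K1 -> psd K2 -> psd (K1 + K2).
Proof.
move=> /psdP h1 /psdP h2; apply/psdP => v; rewrite qformD mulmxDl ipDr ImD.
by rewrite (h1 v).1 (h2 v).1 addr0 addr_ge0 ?(h1 v).2 ?(h2 v).2.
Qed.

Lemma psd_sum (I : Type) (r : seq I) (P : pred I) (F : I -> 'M[C]_d) :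
  (forall i, P i -> psd (F i)) -> psd (\sum_(i <- r | P i) F i).
Proof. by move=> hF; apply: big_ind => //; [exact: psd0 | exact: psdD]. Qed.

Lemma psd1 : psd (1%:M : 'M[C]_d).
Proof. by apply/psdP => v; rewrite /qform mul1mx ipvv; split=> //; apply: vnormsq_ge0. Qed.

End PositiveSemidefinite.

Section NormBounds.
Variables (R : realType) (d : nat).
Notation C := R[i].
Implicit Types (u v w : 'cV[C]_d) (K : 'M[C]_d).

Lemma csq_ip_le u w : csq (ip u w) <= vnormsq u * vnormsq w.
Proof. by have := psd_cauchy_schwarz u w (@psd1 R d); rewrite !qform1 mul1mx. Qed.

Lemma psd_trace_ge0 K : psd K -> 0 <= complex.Re (\tr K).
Proof.
move=> /psdP hK; rewrite /mxtrace Re_sum; apply: sumr_ge0 => j _.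
by rewrite -qform_delta_mx; apply: (hK _).2.
Qed.

Lemma vnormsq_mulmx_le_trace K v : psd K ->
  vnormsq (K *m v) <= complex.Re (\tr K) * qform K v.
Proof.
move=> hK; rewrite /vnormsq /mxtrace Re_sum mulr_suml; apply: ler_sum => j _.
by rewrite -qform_delta_mx -(ip_delta_mx j (K *m v)); apply: psd_cauchy_schwarz.
Qed.

Lemma qform_le_trace K v : psd K -> qform K v <= complex.Re (\tr K) * vnormsq v.
Proof.
move=> hK; have q_ge0 := (proj1 (psdP K) hK v).2.
apply: le_of_sqr_le_mul; first by rewrite mulr_ge0 ?psd_trace_ge0 ?vnormsq_ge0.
have := csq_ip_le v (K *m v); have := vnormsq_mulmx_le_trace v hK.
rewrite /csq -/(qform K v) => hKv hcs.
have := vnormsq_ge0 v; have := sqr_ge0 (complex.Im (ip v (K *m v))); nra.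
Qed.

Lemma vnormsq_mulmx_le K c v : psd K -> (forall w, qform K w <= c * vnormsq w) ->
  vnormsq (K *m v) <= c ^+ 2 * vnormsq v.
Proof.
move=> hK hc; have /psdP hK' := hK; set b := K *m v.
apply: le_of_sqr_le_mul; first by rewrite mulr_ge0 ?sqr_ge0 ?vnormsq_ge0.
have := psd_cauchy_schwarz b v hK; rewrite -/b ipvv /csq /= expr0n /= addr0.
move=> hcs; apply: (le_trans hcs).
rewrite [X in _ <= X](_ : _ = (c * vnormsq b) * (c * vnormsq v)); last by ring.
by apply: ler_pM; rewrite ?(hK' _).2.
Qed.

Lemma qform_le_vnormsq K v : psd (1%:M - K) -> qform K v <= vnormsq v.
Proof.
move=> /psdP /(_ v) [_]; have := qformD (1%:M - K) K v.
by rewrite subrK qform1 => ->; lra.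
Qed.

Lemma vnormsqD_le u w a b : 0 <= a -> 0 <= b ->
  vnormsq u <= a ^+ 2 -> vnormsq w <= b ^+ 2 -> vnormsq (u + w) <= (a + b) ^+ 2.
Proof.
move=> a_ge0 b_ge0 hu hw.
have -> : vnormsq (u + w) = vnormsq u + vnormsq w + 2 * complex.Re (ip u w).
  rewrite -[LHS]/(complex.Re (vnormsq (u + w))%:C) -ipvv !ipDl !ipDr (ipC u w).
  by rewrite !ReD ReJ !ipvv /=; ring.
set g := complex.Re (ip u w).
have g2_le : g ^+ 2 <= (a * b) ^+ 2.
  apply: (@le_trans _ _ (csq (ip u w))); first by rewrite /csq lerDl sqr_ge0.
  apply: le_trans (csq_ip_le u w) _.
  by rewrite exprMn; apply: ler_pM; rewrite ?vnormsq_ge0.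
have : g <= a * b by have := mulr_ge0 a_ge0 b_ge0; nra.
lra.
Qed.

End NormBounds.

Section OperatorNorm.
Variables (R : realType) (d : nat).
Notation C := R[i].

Lemma vnormsq_delta_mx (j : 'I_d) : vnormsq (delta_mx j 0 : 'cV[C]_d) = 1.
Proof. by rewrite -[LHS]/(complex.Re (vnormsq _)%:C) -ipvv ip_delta_mx mxE !eqxx. Qed.

Lemma opnorm_le (A : 'M[C]_d) c : (0 < d)%N -> 0 <= c ->
  (forall v, vnormsq v = 1 -> vnormsq (A *m v) <= c ^+ 2) -> opnorm A <= c.
Proof.
move=> d_gt0 c_ge0 hA; rewrite /opnorm -(ger0_norm c_ge0) -sqrtr_sqr ler_sqrt ?sqr_ge0 //.
apply: ge_sup; last by move=> _ [v hv <-]; apply: hA.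
by exists (vnormsq (A *m delta_mx (Ordinal d_gt0) 0)), (delta_mx (Ordinal d_gt0) 0);
  rewrite //= vnormsq_delta_mx.
Qed.

Lemma opnorm_addmx_le (A K : 'M[C]_d) : (0 < d)%N -> psd A -> psd K -> psd (1%:M - K) ->
  opnorm (A + K) <= complex.Re (\tr A) + 1.
Proof.
move=> d_gt0 hA hK hK1; have tr_ge0 := psd_trace_ge0 hA.
apply: opnorm_le; rewrite ?addr_ge0 // => v hv; rewrite mulmxDl.
apply: vnormsqD_le => //.
  by have := vnormsq_mulmx_le v hA (fun w => qform_le_trace w hA); rewrite hv mulr1.
have hK1' w : qform K w <= 1 * vnormsq w by rewrite mul1r qform_le_vnormsq.
by have := vnormsq_mulmx_le v hK hK1'; rewrite hv mulr1.
Qed.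

End OperatorNorm.

Section JointMeasurement.
Variables (R : realType) (d : nat) (X Y : finType).
Variables (G : X -> Y -> 'M[R[i]]_d) (M1 : X -> 'M[R[i]]_d) (M2 : Y -> 'M[R[i]]_d).
Hypotheses (G_psd : forall x y, psd (G x y)) (G_sum : \sum_x \sum_y G x y = 1%:M).
Hypotheses (G_M1 : forall x, \sum_y G x y = M1 x) (G_M2 : forall y, \sum_x G x y = M2 y).

Definition union_effect x y := M1 x + M2 y - G x y.

Lemma psd_union_effect x y : psd (union_effect x y).
Proof.
have -> : union_effect x y = \sum_(y' | y' != y) G x y' + M2 y.
  by rewrite /union_effect -G_M1 (bigD1 y) //= [G x y + _]addrC addrAC addrK.
by apply: psdD; [apply: psd_sum | rewrite -G_M2; apply: psd_sum].
Qed.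

Lemma psd_1_sub_union_effect x y : psd (1%:M - union_effect x y).
Proof.
have split_y x' : \sum_y' G x' y' = G x' y + \sum_(y' | y' != y) G x' y'.
  by rewrite (bigD1 y).
set T := \sum_(x' | x' != x) \sum_(y' | y' != y) G x' y'.
have -> : 1%:M - union_effect x y = T.
  rewrite -G_sum (eq_bigr _ (fun x' _ => split_y x')) big_split /= G_M2 (bigD1 x) //=.
  rewrite /union_effect -G_M1 split_y -/T.
  by apply/matrixP => i j; rewrite !mxE; ring.
by apply: psd_sum => x' _; apply: psd_sum.
Qed.

Lemma opnorm_marginalsD_le x y : (0 < d)%N ->
  opnorm (M1 x + M2 y) <= complex.Re (\tr (G x y)) + 1.
Proof.
move=> d_gt0; rewrite -(subrK (G x y) (M1 x + M2 y)) addrC.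
exact: opnorm_addmx_le (psd_union_effect x y) (psd_1_sub_union_effect x y).
Qed.

Lemma sum_trace_joint : \sum_x \sum_y complex.Re (\tr (G x y)) = d%:R.
Proof.
rewrite -Re_natr -mxtrace1 -G_sum (raddf_sum (@mxtrace _ d)) Re_sum.
by apply: eq_bigr => x _; rewrite (raddf_sum (@mxtrace _ d)) Re_sum.
Qed.

Lemma sum_opnorm_marginalsD_le : (0 < d)%N ->
  \sum_x \sum_y opnorm (M1 x + M2 y) <= (#|X| * #|Y|)%:R + d%:R.
Proof.
move=> d_gt0; have hxy x y := opnorm_marginalsD_le x y d_gt0.
apply: le_trans (ler_sum _ (fun x _ => ler_sum _ (fun y _ => hxy x y))) _.
under eq_bigr do rewrite big_split /=.
by rewrite big_split /= sum_trace_joint addrC !sumr_const -mulrnA mulnC.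
Qed.

End JointMeasurement.

Theorem theorem1 (R : realType) (d : nat) (hd : (2 <= d)%N)
    (M1 M2 : 'I_d -> 'M[R[i]]_d) :
  is_povm M1 -> is_povm M2 -> compatible M1 M2 ->
  Pqrac M1 M2 <= 2^-1 * (1 + (d%:R)^-1).
Proof.
move=> _ _ [G [[G_psd G_sum] [G_M1 G_M2]]].
have d_gt0 : (0 < d)%N by apply: leq_trans hd.
have G_sum' : \sum_x \sum_y G x y = 1%:M by rewrite pair_bigA.
have := sum_opnorm_marginalsD_le (fun x y => G_psd (x, y)) G_sum' G_M1 G_M2 d_gt0.
rewrite !card_ord => hS; rewrite /Pqrac.
apply: le_trans (ler_wpM2l _ hS) _; first by rewrite invr_ge0 mulr_ge0 ?sqr_ge0.
have d_neq0 : d%:R != 0 :> R by rewrite pnatr_eq0 -lt0n.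
by rewrite le_eqVlt; apply/orP; left; apply/eqP; rewrite natrM; field.
Qed.
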